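(* Let $\theta(q,x):=\sum_{j=0}^{\infty}q^{j(j+1)/2}x^j$. For every fixed $q\in(0,1)$, the function $x\mapsto\theta(q,x)$ has no real zeros $x\geq -5$.
   Context: For $q\in(0,1)$ the series defining $\theta(q,x)$ converges for all $x\in\mathbb{C}$. *)

From Stdlib Require Import Reals Lra Lia.
From Coquelicot Require Import Coquelicot.
Open Scope R_scope.

(* Partial theta function: theta(q,x) = sum_{j>=0} q^{j(j+1)/2} x^j.
   j(j+1)/2 is always a natural number, so Nat.div is exact here.
   For 0<q<1 the series converges absolutely for every real x, so
   Coquelicot's total [Series] is its actual sum. *)
Definition theta (q x : R) : R :=
  Series (fun j : nat => q ^ (j * (j + 1) / 2) * x ^ j).

From Stdlib Require Import Reals Lra Lia Psatz.
From Coquelicot Require Import Coquelicot.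
Open Scope R_scope.

(* For [x >= 0] all terms are nonnegative.  For [x = - z] with [0 <= z <= 5], [theta q (- z)]
   solves [g z = 1 - q z g (q z)], and so does an alternating series [sum (-1)^m a_m] whose term
   ratios [a_(m+1) / a_m = alt_ratio q z m] are explicit; a solution bounded near 0 is unique,
   so the two agree.
   When [z <= 4.6] the ratios are below 1 and Leibniz's bound [a_0 - a_1 > 0] concludes.  When
   [q >= 0.9], an Euler-type product identity bounds the products of ratios by products of an
   explicit function [phi], and a numerical estimate gives [sum_(m >= 1) a_m < a_0].  Otherwise
   [q z <= 4.6], and the first three terms of [alt_series q (q z)] bound
   [theta q (- z) = 1 - q z alt_series q (q z)] from below by an explicit expression, positive
   because [5 q (1 - q) < 1] for [q] outside [[0.27, 0.73]], and by interval subdivision inside. *)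

Lemma pow_le_1 q n : 0 <= q <= 1 -> q ^ n <= 1.
Proof. intros Hq. rewrite <- (pow1 n). apply pow_incr. lra. Qed.

Lemma pow_le_pow_of_le_1 q m n : 0 <= q <= 1 -> (m <= n)%nat -> q ^ n <= q ^ m.
Proof.
  intros Hq Hmn. replace n with (m + (n - m))%nat by lia. rewrite pow_add.
  assert (0 <= q ^ m) by (apply pow_le; lra).
  pose proof (pow_le_1 q (n - m) Hq). nra.
Qed.

Lemma one_add_mul_pos x y : 0 <= x -> 0 <= y -> 0 < 1 + x * y.
Proof. intros Hx Hy. pose proof (Rmult_le_pos x y Hx Hy). lra. Qed.

Lemma one_add_mul_pow_pos z q k : 0 <= z -> 0 <= q -> 0 < 1 + z * q ^ k.
Proof. intros Hz Hq. apply one_add_mul_pos, pow_le; assumption. Qed.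

Lemma Rmult3_le_compat a b c a' b' c' : 0 <= a <= a' -> 0 <= b <= b' -> 0 <= c <= c' ->
  a * b * c <= a' * b' * c'.
Proof.
  intros Ha Hb Hc. apply Rmult_le_compat; try apply Rmult_le_pos; try lra.
  apply Rmult_le_compat; lra.
Qed.

Lemma div_le_compat a a' b b' : 0 <= a <= a' -> 0 < b' <= b -> a / b <= a' / b'.
Proof.
  intros Ha Hb. unfold Rdiv. apply Rmult_le_compat; try lra.
  - apply Rlt_le, Rinv_0_lt_compat; lra.
  - apply Rinv_le_contravar; lra.
Qed.

Lemma div_le_div_cross a b c d : 0 < b -> 0 < d -> a * d <= c * b -> a / b <= c / d.
Proof.
  intros Hb Hd H. apply (Rmult_le_reg_r (b * d)); [apply Rmult_lt_0_compat; assumption|].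
  replace (a / b * (b * d)) with (a * d) by (field; lra).
  replace (c / d * (b * d)) with (c * b) by (field; lra). exact H.
Qed.

Lemma eventually_pow_mult_le_half q X : 0 <= q < 1 -> 0 <= X ->
  exists N, forall n, (N <= n)%nat -> q ^ n * X <= / 2.
Proof.
  intros Hq HX.
  destruct (pow_lt_1_zero q) with (y := / (2 * (X + 1))) as [N HN].
  - rewrite Rabs_pos_eq; lra.
  - apply Rinv_0_lt_compat; lra.
  - exists N. intros n Hn. specialize (HN n Hn).
    rewrite Rabs_pos_eq in HN by (apply pow_le; lra).
    assert (0 <= q ^ n) by (apply pow_le; lra).
    apply (Rmult_lt_compat_r (2 * (X + 1))) in HN; [|lra].
    rewrite Rinv_l in HN; nra.
Qed.

Lemma ex_series_ratio_half (u : nat -> R) (N : nat) :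
  (forall n, 0 <= u n) -> (forall n, (N <= n)%nat -> u (S n) <= / 2 * u n) ->
  ex_series u.
Proof.
  intros Hu Hratio. apply (ex_series_incr_n u N).
  assert (Hgeom : forall k, u (N + k)%nat <= u N * (/ 2) ^ k).
  { induction k as [|k IH].
    - rewrite Nat.add_0_r. simpl. lra.
    - rewrite Nat.add_succ_r.
      specialize (Hratio (N + k)%nat ltac:(lia)). simpl. nra. }
  apply (@ex_series_le R_AbsRing R_CompleteNormedModule _ (fun k => u N * (/ 2) ^ k)).
  - intros k. rewrite Rabs_pos_eq by apply Hu. apply Hgeom.
  - apply (ex_series_scal_l (u N) (fun k => (/ 2) ^ k)), ex_series_geom.
    rewrite Rabs_pos_eq; lra.
Qed.

Lemma Rabs_alt_mult u n : 0 <= u -> Rabs ((-1) ^ n * u) = u.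
Proof. intros Hu. rewrite Rabs_mult, pow_1_abs, Rmult_1_l. apply Rabs_pos_eq, Hu. Qed.

Lemma ex_series_alt (u : nat -> R) : (forall n, 0 <= u n) -> ex_series u ->
  ex_series (fun n => (-1) ^ n * u n).
Proof.
  intros Hu Hs. apply ex_series_Rabs, (ex_series_ext u); [|exact Hs].
  intros n. symmetry. apply Rabs_alt_mult, Hu.
Qed.

Lemma Series_alt_bounds (u : nat -> R) :
  (forall n, 0 <= u n) -> (forall n, u (S n) <= u n) -> ex_series u ->
  u 0%nat - u 1%nat <= Series (fun n => (-1) ^ n * u n) <= u 0%nat - u 1%nat + u 2%nat.
Proof.
  intros Hu Hdec Hs.
  assert (Hcv : Un_cv (fun N => sum_f_R0 (tg_alt u) N) (Series (fun n => (-1) ^ n * u n))).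
  { apply is_series_Reals, Series_correct, ex_series_alt; assumption. }
  assert (H0 : Un_cv u 0) by (apply is_lim_seq_Reals, ex_series_lim_0, Hs).
  destruct (alternated_series_ineq u _ 0 Hdec H0 Hcv) as [L _].
  destruct (alternated_series_ineq u _ 1 Hdec H0 Hcv) as [_ U].
  unfold tg_alt in L, U. simpl in L, U. lra.
Qed.

Lemma Series_alt_ge (u : nat -> R) : (forall n, 0 <= u n) -> ex_series u ->
  u 0%nat - Series (fun n => u (S n)) <= Series (fun n => (-1) ^ n * u n).
Proof.
  intros Hu Hs.
  assert (HS : ex_series (fun n => u (S n))) by (apply (ex_series_incr_1 u), Hs).
  rewrite (Series_incr_1 (fun n => (-1) ^ n * u n)) by (apply ex_series_alt; assumption).
  assert (Hrest : Rabs (Series (fun n => (-1) ^ S n * u (S n))) <= Series (fun n => u (S n))).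
  { rewrite <- (Series_ext (fun n => Rabs ((-1) ^ S n * u (S n))) (fun n => u (S n)))
      by (intros; apply Rabs_alt_mult, Hu).
    apply Series_Rabs, (ex_series_ext (fun n => u (S n))); [|exact HS].
    intros; symmetry; apply Rabs_alt_mult, Hu. }
  apply Rabs_le_between in Hrest. simpl pow at 1. lra.
Qed.

Lemma Series_nonneg (u : nat -> R) : (forall n, 0 <= u n) -> ex_series u -> 0 <= Series u.
Proof.
  intros Hu Hs. replace 0 with (0 * Series u) by ring. rewrite <- Series_scal_l.
  apply Series_le; [|exact Hs]. intros n. rewrite Rmult_0_l. split; [lra|apply Hu].
Qed.

Lemma is_series_alt_telescoping (u : nat -> R) : is_lim_seq u 0 ->
  is_series (fun n => (-1) ^ n * (u n + u (S n))) (u 0%nat).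
Proof.
  intros Hu. apply is_series_Reals, is_lim_seq_Reals.
  assert (Hpartial : forall N, sum_f_R0 (fun n => (-1) ^ n * (u n + u (S n))) N
                               = u 0%nat + (-1) ^ N * u (S N)).
  { induction N as [|N IH]; simpl; [ring|]. rewrite IH. ring. }
  apply (is_lim_seq_ext _ _ _ (fun N => eq_sym (Hpartial N))).
  replace (Finite (u 0%nat)) with (Rbar_plus (u 0%nat) 0) by (simpl; f_equal; ring).
  apply is_lim_seq_plus'; [apply is_lim_seq_const|].
  apply is_lim_seq_abs_0, (is_lim_seq_ext (fun N => Rabs (u (S N)))).
  - intros N. rewrite Rabs_mult, pow_1_abs. ring.
  - apply -> is_lim_seq_abs_0. apply -> (is_lim_seq_incr_1 u). exact Hu.
Qed.

Lemma interval_cover (P : R -> Prop) lo h n :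
  (forall k, (k <= n)%nat -> forall x, lo + INR k * h <= x <= lo + INR (S k) * h -> P x) ->
  forall x, lo <= x <= lo + INR (S n) * h -> P x.
Proof.
  intros Hcell. induction n as [|n IH]; intros x Hx.
  - apply (Hcell 0%nat (le_n 0)). simpl in *. lra.
  - destruct (Rle_lt_dec x (lo + INR (S n) * h)).
    + apply IH; [intros k Hk; apply Hcell; lia|lra].
    + apply (Hcell (S n) (le_n _)). lra.
Qed.

Fixpoint prodR (f : nat -> R) (n : nat) : R :=
  match n with O => 1 | S n => prodR f n * f n end.

Lemma prodR_mult f g n : prodR (fun i => f i * g i) n = prodR f n * prodR g n.
Proof. induction n as [|n IH]; simpl; [ring|]. rewrite IH. ring. Qed.

Lemma prodR_const c n : prodR (fun _ => c) n = c ^ n.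
Proof. induction n as [|n IH]; simpl; [reflexivity|]. rewrite IH. ring. Qed.

Lemma prodR_add f m n : prodR f (m + n) = prodR f m * prodR (fun i => f (m + i)%nat) n.
Proof.
  induction n as [|n IH]; simpl.
  - rewrite Nat.add_0_r. ring.
  - rewrite Nat.add_succ_r. simpl. rewrite IH. ring.
Qed.

Lemma prodR_nonneg f n : (forall i, (i < n)%nat -> 0 <= f i) -> 0 <= prodR f n.
Proof.
  intros H. induction n as [|n IH]; simpl; [lra|].
  apply Rmult_le_pos; [apply IH; intros; apply H|apply H]; lia.
Qed.

Lemma prodR_le f g n : (forall i, (i < n)%nat -> 0 <= f i <= g i) -> prodR f n <= prodR g n.
Proof.
  intros H. induction n as [|n IH]; simpl; [lra|].
  assert (0 <= prodR f n) by (apply prodR_nonneg; intros i Hi; apply H; lia).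
  assert (prodR f n <= prodR g n) by (apply IH; intros; apply H; lia).
  specialize (H n ltac:(lia)). apply Rmult_le_compat; lra.
Qed.

Lemma prodR_le_1 f n : (forall i, 0 <= f i <= 1) -> prodR f n <= 1.
Proof.
  intros H. rewrite <- (pow1 n), <- prodR_const. apply prodR_le. intros; apply H.
Qed.

(** * The partial theta function *)

Definition theta_term (q x : R) (n : nat) : R := q ^ (n * (n + 1) / 2) * x ^ n.

Lemma triangular_succ n : (S n * (S n + 1) / 2 = n * (n + 1) / 2 + S n)%nat.
Proof.
  replace (S n * (S n + 1))%nat with (n * (n + 1) + S n * 2)%nat by lia.
  rewrite Nat.div_add by lia. reflexivity.
Qed.

Lemma theta_term_succ q x n : theta_term q x (S n) = q ^ S n * x * theta_term q x n.
Proof. unfold theta_term. rewrite triangular_succ, pow_add. simpl. ring. Qed.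

Lemma theta_term_succ_scaled q x n : theta_term q x (S n) = q * x * theta_term q (q * x) n.
Proof. unfold theta_term. rewrite triangular_succ, pow_add, Rpow_mult_distr. simpl. ring. Qed.

Lemma theta_term_nonneg q x n : 0 <= q -> 0 <= x -> 0 <= theta_term q x n.
Proof. intros. unfold theta_term. apply Rmult_le_pos; apply pow_le; assumption. Qed.

Lemma theta_term_opp q z n : theta_term q (- z) n = (-1) ^ n * theta_term q z n.
Proof.
  unfold theta_term. replace (- z) with (-1 * z) by ring. rewrite Rpow_mult_distr. ring.
Qed.

Lemma ex_series_abs_theta_term q x : 0 <= q < 1 -> ex_series (fun n => Rabs (theta_term q x n)).
Proof.
  intros Hq.
  destruct (eventually_pow_mult_le_half q (Rabs x) Hq (Rabs_pos x)) as [N HN].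
  apply (ex_series_ratio_half _ N); [intros; apply Rabs_pos|].
  intros n Hn. rewrite theta_term_succ, !Rabs_mult, (Rabs_pos_eq (q ^ S n)) by (apply pow_le; lra).
  specialize (HN (S n) ltac:(lia)). pose proof (Rabs_pos (theta_term q x n)). nra.
Qed.

Lemma ex_series_theta_term q x : 0 <= q < 1 -> ex_series (theta_term q x).
Proof. intros Hq. apply ex_series_Rabs, ex_series_abs_theta_term, Hq. Qed.

Lemma theta_functional_eq q x : 0 <= q < 1 -> theta q x = 1 + q * x * theta q (q * x).
Proof.
  intros Hq. change (Series (theta_term q x) = 1 + q * x * Series (theta_term q (q * x))).
  rewrite Series_incr_1 by (apply ex_series_theta_term, Hq).
  rewrite (Series_ext _ _ (theta_term_succ_scaled q x)), Series_scal_l.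
  unfold theta_term at 1. simpl. ring.
Qed.

Lemma theta_pos q x : 0 <= q < 1 -> 0 <= x -> 0 < theta q x.
Proof.
  intros Hq Hx. change (0 < Series (theta_term q x)).
  rewrite Series_incr_1 by (apply ex_series_theta_term, Hq).
  assert (0 <= Series (fun n => theta_term q x (S n))).
  { apply Series_nonneg; [intros; apply theta_term_nonneg; lra|].
    apply (ex_series_incr_1 (theta_term q x)), ex_series_theta_term, Hq. }
  unfold theta_term at 1. simpl. lra.
Qed.

(** * An alternating solution of the functional equation *)

Fixpoint alt_num (q z : R) (m : nat) : R :=
  match m with
  | O => 1
  | S m => alt_num q z m * ((1 - q ^ (2*m+1)) * q ^ (2*m+2) * z ^ 2 /
             ((1 + z * q ^ (2*m+1)) * (1 + z * q ^ (2*m+2))))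
  end.

Definition alt_term (q z : R) (m : nat) : R := alt_num q z m / (1 + z * q ^ (2*m+1)).

Definition alt_ratio (q z : R) (m : nat) : R :=
  (1 - q ^ (2*m+1)) * q ^ (2*m+2) * z ^ 2 / ((1 + z * q ^ (2*m+2)) * (1 + z * q ^ (2*m+3))).

Definition alt_series (q z : R) : R := Series (fun m => (-1) ^ m * alt_term q z m).

Lemma pow_even_split q m :
  q ^ (2*m+1) = q ^ (2*m) * q /\ q ^ (2*m+2) = q ^ (2*m) * q ^ 2 /\
  q ^ (2*m+3) = q ^ (2*m) * q ^ 3 /\ q ^ (2 * S m) = q ^ (2*m) * q ^ 2 /\
  q ^ (2 * S m + 1) = q ^ (2*m) * q ^ 3.
Proof. replace (2 * S m)%nat with (2*m+2)%nat by lia. rewrite !pow_add. repeat split; ring. Qed.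

Ltac denominators_nonzero :=
  repeat split; apply Rgt_not_eq, one_add_mul_pos;
  repeat apply Rmult_le_pos; try apply pow_le; lra.

Lemma ratio_bounds q1 q2 w1 w2 q w i j l n :
  0 <= q1 <= q -> q <= q2 <= 1 -> 0 <= w1 <= w -> w <= w2 ->
  0 <= (1 - q2 ^ i) * q1 ^ j * w1 ^ 2 / ((1 + w2 * q2 ^ l) * (1 + w2 * q2 ^ n)) /\
  (1 - q2 ^ i) * q1 ^ j * w1 ^ 2 / ((1 + w2 * q2 ^ l) * (1 + w2 * q2 ^ n))
  <= (1 - q ^ i) * q ^ j * w ^ 2 / ((1 + w * q ^ l) * (1 + w * q ^ n))
  <= (1 - q1 ^ i) * q2 ^ j * w2 ^ 2 / ((1 + w1 * q1 ^ l) * (1 + w1 * q1 ^ n)).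
Proof.
  intros Hq1 Hq2 Hw1 Hw2.
  assert (Hpow : forall k, 0 <= q1 ^ k <= q ^ k /\ q ^ k <= q2 ^ k <= 1).
  { intros k. repeat split; [apply pow_le|apply pow_incr|apply pow_incr|apply pow_le_1]; lra. }
  assert (Hsq : 0 <= w1 ^ 2 <= w ^ 2 /\ w ^ 2 <= w2 ^ 2).
  { repeat split; [apply pow_le|apply pow_incr|apply pow_incr]; lra. }
  assert (Hden : forall k, 0 < 1 + w1 * q1 ^ k /\ 1 + w1 * q1 ^ k <= 1 + w * q ^ k
                           /\ 1 + w * q ^ k <= 1 + w2 * q2 ^ k).
  { intros k. destruct (Hpow k) as [[H1 H2] [H3 H4]].
    repeat split; [apply one_add_mul_pos; lra| |];
      apply Rplus_le_compat_l, Rmult_le_compat; lra. }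
  destruct (Hpow i) as [[Hi1 Hi2] [Hi3 Hi4]]. destruct (Hpow j) as [[Hj1 Hj2] [Hj3 Hj4]].
  destruct (Hden l) as (Hl1 & Hl2 & Hl3). destruct (Hden n) as (Hn1 & Hn2 & Hn3).
  split; [apply Rdiv_le_0_compat; [apply Rmult_le_pos; [apply Rmult_le_pos|]|
                                  apply Rmult_lt_0_compat]; lra|].
  split; apply div_le_compat; repeat split.
  - apply Rmult_le_pos; [apply Rmult_le_pos|]; lra.
  - apply Rmult3_le_compat; lra.
  - apply Rmult_lt_0_compat; lra.
  - apply Rmult_le_compat; lra.
  - apply Rmult_le_pos; [apply Rmult_le_pos|]; lra.
  - apply Rmult3_le_compat; lra.
  - apply Rmult_lt_0_compat; lra.
  - apply Rmult_le_compat; lra.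
Qed.

Lemma ratio_nonneg q z i j k l : 0 <= q <= 1 -> 0 <= z ->
  0 <= (1 - q ^ i) * q ^ j * z ^ 2 / ((1 + z * q ^ k) * (1 + z * q ^ l)).
Proof. intros Hq Hz. apply (ratio_bounds q q z z q z i j k l); lra. Qed.

Section AlternatingSeries.

Variable q : R.
Hypothesis Hq : 0 < q < 1.

Lemma alt_num_nonneg z m : 0 <= z -> 0 <= alt_num q z m.
Proof.
  intros Hz. induction m as [|m IH]; cbn [alt_num]; [lra|].
  apply Rmult_le_pos; [exact IH|apply ratio_nonneg; lra].
Qed.

Lemma alt_term_nonneg z m : 0 <= z -> 0 <= alt_term q z m.
Proof.
  intros Hz. apply Rdiv_le_0_compat; [apply alt_num_nonneg, Hz|apply one_add_mul_pow_pos; lra].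
Qed.

Lemma alt_ratio_nonneg z m : 0 <= z -> 0 <= alt_ratio q z m.
Proof. intros Hz. apply ratio_nonneg; lra. Qed.

Lemma alt_term_0 z : alt_term q z 0 = 1 / (1 + z * q).
Proof. unfold alt_term. simpl. f_equal. ring. Qed.

Lemma alt_term_0_pos z : 0 <= z -> 0 < alt_term q z 0.
Proof.
  intros Hz. rewrite alt_term_0. apply Rdiv_lt_0_compat; [lra|apply one_add_mul_pos; lra].
Qed.

Lemma alt_term_succ z m : 0 <= z -> alt_term q z (S m) = alt_term q z m * alt_ratio q z m.
Proof.
  intros Hz. unfold alt_term, alt_ratio. cbn [alt_num].
  destruct (pow_even_split q m) as (E1 & E2 & E3 & _ & E5). rewrite E1, E2, E3, E5.
  assert (0 < q ^ (2*m)) by (apply pow_lt; lra).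
  field. denominators_nonzero.
Qed.

Lemma alt_term_prod z m : 0 <= z -> alt_term q z m = alt_term q z 0 * prodR (alt_ratio q z) m.
Proof.
  intros Hz. induction m as [|m IH]; simpl; [ring|]. rewrite alt_term_succ, IH by exact Hz. ring.
Qed.

Lemma alt_num_scaled z m : 0 <= z ->
  alt_num q (q * z) m = q ^ (2*m) * (1 + z * q) * alt_num q z m / (1 + z * q ^ (2*m+1)).
Proof.
  intros Hz. induction m as [|m IH]; cbn [alt_num].
  - simpl. field. denominators_nonzero.
  - rewrite IH.
    destruct (pow_even_split q m) as (E1 & E2 & _ & E4 & E5). rewrite E1, E2, E4, E5.
    assert (0 < q ^ (2*m)) by (apply pow_lt; lra).
    field. denominators_nonzero.
Qed.

(* The two sides of the functional equation telescope term by term. *)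
Lemma alt_term_scaled_add z m : 0 <= z ->
  alt_term q z m + q * z * alt_term q (q * z) m = alt_num q z m + alt_num q z (S m).
Proof.
  intros Hz. unfold alt_term. rewrite alt_num_scaled by exact Hz. cbn [alt_num].
  destruct (pow_even_split q m) as (E1 & E2 & _). rewrite E1, E2.
  assert (0 < q ^ (2*m)) by (apply pow_lt; lra).
  field. denominators_nonzero.
Qed.

Lemma alt_ratio_le z m : 0 <= z -> alt_ratio q z m <= z ^ 2 * q ^ (2*m+2).
Proof.
  intros Hz. unfold alt_ratio. rewrite <- (Rdiv_1_r (z ^ 2 * q ^ (2*m+2))).
  pose proof (pow_le q (2*m+1) ltac:(lra)). pose proof (pow_le_1 q (2*m+1) ltac:(lra)).
  assert (0 <= z ^ 2 * q ^ (2*m+2)) by (apply Rmult_le_pos; apply pow_le; lra).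
  assert (0 <= z * q ^ (2*m+2)) by (apply Rmult_le_pos; [|apply pow_le]; lra).
  assert (0 <= z * q ^ (2*m+3)) by (apply Rmult_le_pos; [|apply pow_le]; lra).
  apply div_le_compat; nra.
Qed.

Lemma ex_series_alt_term z : 0 <= z -> ex_series (alt_term q z).
Proof.
  intros Hz.
  destruct (eventually_pow_mult_le_half q (z ^ 2) ltac:(lra) ltac:(apply pow_le; lra)) as [N HN].
  apply (ex_series_ratio_half _ N); [intros; apply alt_term_nonneg, Hz|].
  intros n Hn. rewrite alt_term_succ by exact Hz.
  pose proof (alt_ratio_le z n Hz). pose proof (alt_term_nonneg z n Hz).
  pose proof (pow_le_pow_of_le_1 q n (2*n+2) ltac:(lra) ltac:(lia)).
  specialize (HN n Hn). assert (0 <= z ^ 2) by (apply pow_le; lra).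
  assert (alt_ratio q z n <= / 2) by nra. nra.
Qed.

Lemma alt_num_le z m : 0 <= z -> alt_num q z m <= (1 + z) * alt_term q z m.
Proof.
  intros Hz.
  assert (0 < 1 + z * q ^ (2*m+1)) by (apply one_add_mul_pow_pos; lra).
  replace (alt_num q z m) with (alt_term q z m * (1 + z * q ^ (2*m+1)))
    by (unfold alt_term; field; lra).
  pose proof (alt_term_nonneg z m Hz).
  assert (z * q ^ (2*m+1) <= z) by (pose proof (pow_le_1 q (2*m+1) ltac:(lra)); nra).
  nra.
Qed.

Lemma is_lim_seq_alt_num z : 0 <= z -> is_lim_seq (alt_num q z) 0.
Proof.
  intros Hz. apply (is_lim_seq_le_le (fun _ => 0) _ (fun m => (1 + z) * alt_term q z m)).
  - intros m. split; [apply alt_num_nonneg|apply alt_num_le]; exact Hz.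
  - apply is_lim_seq_const.
  - replace (Finite 0) with (Rbar_mult (1 + z) 0) by (simpl; f_equal; ring).
    apply is_lim_seq_scal_l, ex_series_lim_0, ex_series_alt_term, Hz.
Qed.

Lemma alt_series_functional_eq z : 0 <= z -> alt_series q z + q * z * alt_series q (q * z) = 1.
Proof.
  intros Hz. unfold alt_series.
  assert (Hqz : 0 <= q * z) by nra.
  pose proof (ex_series_alt _ (fun m => alt_term_nonneg z m Hz) (ex_series_alt_term z Hz)) as Hs.
  pose proof (ex_series_alt _ (fun m => alt_term_nonneg (q * z) m Hqz)
                (ex_series_alt_term (q * z) Hqz)) as Hs'.
  rewrite <- Series_scal_l, <- Series_plus;
    [|exact Hs|exact (ex_series_scal_l _ _ Hs')].
  change 1 with (alt_num q z 0).
  rewrite <- (is_series_unique _ _ (is_series_alt_telescoping _ (is_lim_seq_alt_num z Hz))).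
  apply Series_ext. intros m. rewrite <- alt_term_scaled_add by exact Hz. ring.
Qed.

End AlternatingSeries.

(* With [u = z q^(2m+2)], the inequality [alt_ratio < 1] is the positivity of a quadratic in [u]
   whose discriminant is negative as long as [z <= 4.6]. *)
Lemma quadratic_pos q z u : 0 < q < 1 -> 0 <= z <= 46/10 -> 0 <= u ->
  0 < (q ^ 2 + 1) * u ^ 2 + q * (1 + q - z) * u + q.
Proof.
  intros Hq Hz Hu.
  assert (Hcubic : 0 < 4 - 1296/100 * q + 112/10 * q ^ 2 - q ^ 3).
  { pose proof (pow2_ge_0 (q - 634/1000)).
    assert (0 <= (q - 634/1000) ^ 2 * (1 - q)) by (apply Rmult_le_pos; lra). nra. }
  assert (Hdisc : q * (z - 1 - q) ^ 2 < 4 * (q ^ 2 + 1)).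
  { assert ((z - 1 - q) ^ 2 <= (36/10 - q) ^ 2) by nra. nra. }
  assert (0 <= (2 * (q ^ 2 + 1) * u + q * (1 + q - z)) ^ 2) by apply pow2_ge_0.
  nra.
Qed.

Lemma alt_ratio_lt_1 q z m : 0 < q < 1 -> 0 <= z <= 46/10 -> alt_ratio q z m < 1.
Proof.
  intros Hq Hz. unfold alt_ratio.
  set (t := q ^ (2*m+1)).
  replace (q ^ (2*m+2)) with (t * q) by (unfold t; rewrite !pow_add; ring).
  replace (q ^ (2*m+3)) with (t * q * q) by (unfold t; rewrite !pow_add; ring).
  assert (0 < t <= 1) by (split; [apply pow_lt|apply pow_le_1]; lra).
  assert (0 <= z * (t * q)) by (apply Rmult_le_pos; nra).
  pose proof (quadratic_pos q z (z * (t * q)) Hq Hz ltac:(assumption)).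
  assert (Hden : 0 < (1 + z * (t * q)) * (1 + z * (t * q * q)))
    by (apply Rmult_lt_0_compat; nra).
  apply (Rdiv_lt_1 _ _ Hden), (Rmult_lt_reg_l q); [lra|]. nra.
Qed.

Lemma alt_term_decreasing q z m : 0 < q < 1 -> 0 <= z <= 46/10 ->
  alt_term q z (S m) <= alt_term q z m.
Proof.
  intros Hq Hz. rewrite alt_term_succ by lra.
  pose proof (alt_term_nonneg q Hq z m ltac:(lra)). pose proof (alt_ratio_lt_1 q z m Hq Hz). nra.
Qed.

Lemma alt_series_bounds q z : 0 < q < 1 -> 0 <= z <= 46/10 ->
  alt_term q z 0 - alt_term q z 1 <= alt_series q z
  <= alt_term q z 0 - alt_term q z 1 + alt_term q z 2.
Proof.
  intros Hq Hz. apply Series_alt_bounds.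
  - intros m. apply alt_term_nonneg; lra.
  - intros m. apply alt_term_decreasing; assumption.
  - apply ex_series_alt_term; lra.
Qed.

Lemma alt_series_pos_of_z_le q z : 0 < q < 1 -> 0 <= z <= 46/10 -> 0 < alt_series q z.
Proof.
  intros Hq Hz. destruct (alt_series_bounds q z Hq Hz) as [HA _].
  rewrite (alt_term_succ q Hq z 0) in HA by lra.
  pose proof (alt_term_0_pos q Hq z ltac:(lra)). pose proof (alt_ratio_lt_1 q z 0 Hq Hz). nra.
Qed.

Lemma alt_series_in_01 q w : 0 < q < 1 -> 0 <= w <= 1 -> 0 <= alt_series q w <= 1.
Proof.
  intros Hq Hw. destruct (alt_series_bounds q w Hq ltac:(lra)) as [L U].
  pose proof (alt_term_decreasing q w 0 Hq ltac:(lra)).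
  pose proof (alt_term_decreasing q w 1 Hq ltac:(lra)).
  pose proof (alt_term_nonneg q Hq w 2 ltac:(lra)).
  assert (alt_term q w 0 <= 1).
  { rewrite alt_term_0. assert (Hd : 0 < 1 + w * q) by (apply one_add_mul_pos; lra).
    apply (Rdiv_le_1 _ _ Hd). nra. }
  lra.
Qed.

Lemma alt_series_le_three_terms q w : 0 < q < 1 -> 0 <= w <= 46/10 ->
  alt_series q w <= (1 - alt_ratio q w 0 * (1 - alt_ratio q w 1)) / (1 + w * q).
Proof.
  intros Hq Hw. destruct (alt_series_bounds q w Hq Hw) as [_ HA].
  rewrite (alt_term_succ q Hq w 1), (alt_term_succ q Hq w 0), alt_term_0 in HA by lra.
  replace ((1 - alt_ratio q w 0 * (1 - alt_ratio q w 1)) / (1 + w * q))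
    with (1 / (1 + w * q) - 1 / (1 + w * q) * alt_ratio q w 0
          + 1 / (1 + w * q) * alt_ratio q w 0 * alt_ratio q w 1)
    by (field; apply Rgt_not_eq, one_add_mul_pos; lra).
  exact HA.
Qed.

Lemma theta_opp_functional_eq q z : 0 <= q < 1 -> theta q (- z) = 1 - q * z * theta q (- (q * z)).
Proof.
  intros Hq. rewrite theta_functional_eq by exact Hq.
  replace (q * - z) with (- (q * z)) by ring. ring.
Qed.

Lemma theta_opp_in_01 q w : 0 <= q < 1 -> 0 <= w <= 1 -> 0 <= theta q (- w) <= 1.
Proof.
  intros Hq Hw.
  change (0 <= Series (theta_term q (- w)) <= 1).
  rewrite (Series_ext _ _ (theta_term_opp q w)).
  assert (Hdec : forall n, theta_term q w (S n) <= theta_term q w n).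
  { intros n. rewrite theta_term_succ. pose proof (theta_term_nonneg q w n ltac:(lra) ltac:(lra)).
    pose proof (pow_le_1 q (S n) ltac:(lra)). pose proof (pow_le q (S n) ltac:(lra)).
    assert (q ^ S n * w <= 1) by nra. nra. }
  destruct (Series_alt_bounds (theta_term q w)) as [L U].
  - intros n. apply theta_term_nonneg; lra.
  - exact Hdec.
  - apply ex_series_theta_term, Hq.
  - pose proof (Hdec 0%nat). pose proof (Hdec 1%nat).
    replace (theta_term q w 0) with 1 in * by (unfold theta_term; simpl; ring). lra.
Qed.

(* Each step towards 0 contracts by the factor [q z <= 1/2]. *)
Lemma functional_eq_unique (D : R -> R) q M : 0 < q < 1 ->
  (forall z, 0 <= z -> D z = - (q * z) * D (q * z)) ->
  (forall w, 0 <= w <= / 2 -> Rabs (D w) <= M) ->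
  forall z, 0 <= z -> D z = 0.
Proof.
  intros Hq HD HM.
  assert (Hgeom : forall n w, 0 <= w <= / 2 -> Rabs (D w) <= M * (/ 2) ^ n).
  { induction n as [|n IH]; intros w Hw; [rewrite pow_O, Rmult_1_r; apply HM, Hw|].
    rewrite HD, Rabs_mult, Rabs_Ropp, Rabs_pos_eq by nra.
    specialize (IH (q * w) ltac:(nra)). pose proof (Rabs_pos (D (q * w))).
    assert (q * w * Rabs (D (q * w)) <= q * w * (M * (/ 2) ^ n))
      by (apply Rmult_le_compat_l; nra).
    assert (q * w * (M * (/ 2) ^ n) <= / 2 * (M * (/ 2) ^ n))
      by (apply Rmult_le_compat_r; nra).
    simpl. lra. }
  assert (Hsmall : forall w, 0 <= w <= / 2 -> D w = 0).
  { intros w Hw.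
    assert (Hlim : Rbar_le (Rabs (D w)) (Rbar_mult M 0)).
    { apply (is_lim_seq_le (fun _ => Rabs (D w)) (fun n => M * (/ 2) ^ n)).
      - intros n. apply Hgeom, Hw.
      - apply is_lim_seq_const.
      - apply is_lim_seq_scal_l, is_lim_seq_geom. rewrite Rabs_pos_eq; lra. }
    simpl in Hlim. pose proof (Rabs_pos (D w)).
    apply Rabs_eq_0. lra. }
  assert (Hiter : forall n z, 0 <= z -> q ^ n * z <= / 2 -> D z = 0).
  { induction n as [|n IH]; intros z Hz Hn.
    - apply Hsmall. simpl in Hn. lra.
    - rewrite HD, (IH (q * z)) by (simpl in Hn; nra). ring. }
  intros z Hz. destruct (eventually_pow_mult_le_half q z ltac:(lra) Hz) as [N HN].
  exact (Hiter N z Hz (HN N (le_n N))).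
Qed.

Lemma theta_opp_eq_alt_series q z : 0 < q < 1 -> 0 <= z -> theta q (- z) = alt_series q z.
Proof.
  intros Hq Hz. apply Rminus_diag_uniq.
  apply (functional_eq_unique (fun w => theta q (- w) - alt_series q w) q 1 Hq); [| |exact Hz].
  - intros w Hw. cbv beta. rewrite theta_opp_functional_eq by lra.
    pose proof (alt_series_functional_eq q Hq w Hw). lra.
  - intros w Hw. cbv beta. apply Rabs_le.
    pose proof (theta_opp_in_01 q w ltac:(lra) ltac:(lra)).
    pose proof (alt_series_in_01 q w Hq ltac:(lra)). split; lra.
Qed.

(** * The case 9/10 <= q *)

Definition qpoch_even (q : R) (n : nat) : R := prodR (fun j => 1 - q ^ (2 * S j)) n.

Definition euler_factor (q : R) (k : nat) : R :=
  (1 - q ^ (2*k+1)) * (1 + q ^ (2*k+1)) * (1 + q ^ (2*k+2)).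

Lemma euler_factor_mul q m : euler_factor q m * (1 - q ^ (2 * S m))
  = (1 - q ^ (2 * S (m + m))) * (1 - q ^ (2 * S (S (m + m)))).
Proof.
  unfold euler_factor.
  replace (2 * S m)%nat with (2*m+1+1)%nat by lia.
  replace (2*m+2)%nat with (2*m+1+1)%nat by lia.
  replace (2 * S (m + m))%nat with ((2*m+1) * 2)%nat by lia.
  replace (2 * S (S (m + m)))%nat with ((2*m+1) * 2 + 2)%nat by lia.
  rewrite (pow_add q ((2*m+1) * 2) 2), !(pow_add q (2*m+1) 1), (pow_mult q (2*m+1) 2).
  ring.
Qed.

Lemma prodR_euler_factor q m :
  prodR (euler_factor q) m * qpoch_even q m = qpoch_even q (m + m).
Proof.
  induction m as [|m IH]; [simpl; ring|].
  replace (S m + S m)%nat with (S (S (m + m))) by lia.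
  unfold qpoch_even in *. cbn [prodR].
  rewrite <- IH, !Rmult_assoc, <- euler_factor_mul. ring.
Qed.

Lemma prodR_euler_factor_le_1 q m : 0 < q < 1 -> prodR (euler_factor q) m <= 1.
Proof.
  intros Hq.
  assert (Hf : forall j, 0 < 1 - q ^ (2 * S j) <= 1).
  { intros j. pose proof (pow_lt q (2 * S j) ltac:(lra)).
    pose proof (pow_lt_1_compat q (2 * S j) ltac:(lra) ltac:(lia)). lra. }
  assert (Hpos : 0 < qpoch_even q m).
  { unfold qpoch_even. clear -Hf. induction m as [|m IH]; simpl; [lra|].
    apply Rmult_lt_0_compat; [exact IH|apply Hf]. }
  assert (Htail : qpoch_even q (m + m) <= qpoch_even q m).
  { unfold qpoch_even. rewrite prodR_add.
    assert (prodR (fun i => 1 - q ^ (2 * S (m + i))) m <= 1)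
      by (apply prodR_le_1; intros i; pose proof (Hf (m + i)%nat); lra).
    assert (0 <= prodR (fun i => 1 - q ^ (2 * S (m + i))) m)
      by (apply prodR_nonneg; intros i _; pose proof (Hf (m + i)%nat); lra).
    fold (qpoch_even q m). nra. }
  rewrite <- prodR_euler_factor in Htail. nra.
Qed.

Definition phi (t : R) : R := 25 * t / ((1 + t) ^ 2 * (1 + 5 * t) * (1 + 45/10 * t)).

Lemma phi_denominator_pos t : 0 <= t -> 0 < (1 + t) ^ 2 * (1 + 5 * t) * (1 + 45/10 * t).
Proof. intros Ht. repeat apply Rmult_lt_0_compat; try apply pow_lt; lra. Qed.

Lemma phi_nonneg t : 0 <= t -> 0 <= phi t.
Proof.
  intros Ht. apply Rdiv_le_0_compat; [lra|apply phi_denominator_pos, Ht].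
Qed.

(* The bound is attained at [z = 5], [q = 9/10]; the Euler factor absorbs [1 - q^(2k+1)]. *)
Lemma alt_ratio_le_euler_phi q z k : 9/10 <= q < 1 -> 0 <= z <= 5 ->
  alt_ratio q z k <= euler_factor q k * phi (q ^ (2*k+2)).
Proof.
  intros Hq Hz. unfold alt_ratio, euler_factor, phi.
  set (s := q ^ (2*k+1)).
  replace (q ^ (2*k+2)) with (s * q) by (unfold s; rewrite !pow_add; ring).
  replace (q ^ (2*k+3)) with (s * q * q) by (unfold s; rewrite !pow_add; ring).
  set (t := s * q).
  assert (Hs : 0 < s <= 1) by (split; [apply pow_lt|apply pow_le_1]; lra).
  assert (Ht : 0 < t <= s) by (unfold t; split; nra).
  assert (Hzt : 0 <= z * t) by nra.
  assert (Hmono : t * z ^ 2 / ((1 + z * t) * (1 + z * (t * q)))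
                  <= 25 * t / ((1 + 5 * t) * (1 + 45/10 * t))).
  { apply div_le_div_cross; [apply Rmult_lt_0_compat; nra|apply Rmult_lt_0_compat; lra|].
    assert (z * (t * q) >= 9/10 * (z * t)) by nra.
    assert (0 <= t * (25 - z * z)) by (apply Rmult_le_pos; nra).
    assert (0 <= t * t * z * (5 - z)) by (repeat apply Rmult_le_pos; lra).
    nra. }
  assert (Hrho : (1 - s) * t * z ^ 2 / ((1 + z * t) * (1 + z * (t * q)))
                 = (1 - s) * (t * z ^ 2 / ((1 + z * t) * (1 + z * (t * q))))).
  { field. split; apply Rgt_not_eq; nra. }
  assert (Hphi : (1 - s) * (1 + s) * (1 + t)
                 * (25 * t / ((1 + t) ^ 2 * (1 + 5 * t) * (1 + 45/10 * t)))
                 = (1 - s) * ((1 + s) / (1 + t) * (25 * t / ((1 + 5 * t) * (1 + 45/10 * t))))).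
  { field. repeat split; apply Rgt_not_eq; nra. }
  replace (z * (s * q * q)) with (z * (t * q)) by (unfold t; ring).
  rewrite Hrho, Hphi. apply Rmult_le_compat_l; [lra|].
  assert (1 <= (1 + s) / (1 + t)) by (apply Rle_div_r; lra).
  assert (0 <= 25 * t / ((1 + 5 * t) * (1 + 45/10 * t)))
    by (apply Rdiv_le_0_compat; [lra|apply Rmult_lt_0_compat; lra]).
  nra.
Qed.

Definition phi_pow (q : R) (k : nat) : R := phi (q ^ (2*k+2)).

Lemma phi_pow_nonneg q k : 0 <= q -> 0 <= phi_pow q k.
Proof. intros Hq. apply phi_nonneg, pow_le, Hq. Qed.

Lemma alt_term_le_prod_phi_pow q z m : 9/10 <= q < 1 -> 0 <= z <= 5 ->
  alt_term q z m <= alt_term q z 0 * prodR (phi_pow q) m.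
Proof.
  intros Hq Hz. rewrite (alt_term_prod q ltac:(lra) z m ltac:(lra)).
  apply Rmult_le_compat_l; [apply alt_term_nonneg; lra|].
  apply Rle_trans with (prodR (fun k => euler_factor q k * phi_pow q k) m).
  - apply prodR_le. intros k _.
    split; [apply alt_ratio_nonneg; lra|apply alt_ratio_le_euler_phi; assumption].
  - rewrite prodR_mult.
    pose proof (prodR_euler_factor_le_1 q m ltac:(lra)).
    assert (0 <= prodR (phi_pow q) m) by (apply prodR_nonneg; intros; apply phi_pow_nonneg; lra).
    assert (0 <= prodR (euler_factor q) m).
    { apply prodR_nonneg. intros k _. unfold euler_factor.
      pose proof (pow_le_1 q (2*k+1) ltac:(lra)). pose proof (pow_le q (2*k+1) ltac:(lra)).
      pose proof (pow_le q (2*k+2) ltac:(lra)).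
      apply Rmult_le_pos; [apply Rmult_le_pos|]; lra. }
    nra.
Qed.

Lemma phi_le t : 0 <= t <= 1 -> phi t <= 975/1000.
Proof.
  intros Ht. unfold phi. pose proof (phi_denominator_pos t ltac:(lra)).
  apply Rle_div_l; [lra|].
  pose proof (pow2_ge_0 (t - 13/100)).
  assert (0 <= (t - 13/100) ^ 2 * t) by (apply Rmult_le_pos; lra).
  assert (0 <= (t - 13/100) ^ 2 * t * t) by (apply Rmult_le_pos; nra).
  nra.
Qed.

Lemma phi_antitone s t : 0 < s -> s <= t <= 1 -> 1 <= 225/10 * s * t -> phi t <= phi s.
Proof.
  intros Hs Ht Hst. unfold phi.
  apply div_le_div_cross; [apply phi_denominator_pos; lra|apply phi_denominator_pos; lra|].
  assert (0 <= (t - s) * (225/10 * s * t - 1)) by (apply Rmult_le_pos; lra).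
  assert (t * ((1 + 5 * s) * (1 + 45/10 * s)) <= s * ((1 + 5 * t) * (1 + 45/10 * t))) by nra.
  assert ((1 + s) ^ 2 <= (1 + t) ^ 2) by (apply pow_incr; lra).
  assert (0 <= (1 + s) ^ 2) by (apply pow_le; lra).
  assert (0 <= t * ((1 + 5 * s) * (1 + 45/10 * s))) by (apply Rmult_le_pos; nra).
  assert (t * ((1 + 5 * s) * (1 + 45/10 * s)) * (1 + s) ^ 2
          <= s * ((1 + 5 * t) * (1 + 45/10 * t)) * (1 + t) ^ 2)
    by (apply Rmult_le_compat; lra).
  lra.
Qed.

(* [phi] decreases on [[0.9^14, 1]], which contains the factors with [k <= 6]. *)
Lemma prodR_phi_pow_le q m : 9/10 <= q < 1 -> (m <= 7)%nat ->
  prodR (phi_pow q) m <= prodR (phi_pow (9/10)) m.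
Proof.
  intros Hq Hm. apply prodR_le. intros k Hk.
  split; [apply phi_pow_nonneg; lra|]. unfold phi_pow.
  assert (H14 : (9/10) ^ 14 <= (9/10) ^ (2*k+2)) by (apply pow_le_pow_of_le_1; lra || lia).
  assert ((9/10) ^ (2*k+2) <= q ^ (2*k+2)) by (apply pow_incr; lra).
  pose proof (pow_le_1 q (2*k+2) ltac:(lra)).
  apply phi_antitone; nra.
Qed.

Lemma prodR_phi_pow_tail q j : 9/10 <= q < 1 ->
  prodR (phi_pow q) (7 + j) <= prodR (phi_pow (9/10)) 7 * (975/1000) ^ j.
Proof.
  intros Hq. rewrite prodR_add, <- prodR_const.
  assert (Hphi : forall k, 0 <= phi_pow q k <= 975/1000).
  { intros k. split; [apply phi_pow_nonneg; lra|].
    apply phi_le. split; [apply pow_le|apply pow_le_1]; lra. }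
  apply Rmult_le_compat.
  - apply prodR_nonneg. intros; apply Hphi.
  - apply prodR_nonneg. intros; apply Hphi.
  - apply prodR_phi_pow_le; [exact Hq|lia].
  - apply prodR_le. intros; apply Hphi.
Qed.

Lemma phi_pow_sum_lt_1 :
  sum_f_R0 (fun m => prodR (phi_pow (9/10)) (S m)) 5
  + prodR (phi_pow (9/10)) 7 / (1 - 975/1000) < 1.
Proof. unfold phi_pow, phi. simpl. lra. Qed.

Lemma Series_alt_term_succ_le q z : 9/10 <= q < 1 -> 0 <= z <= 5 ->
  Series (fun m => alt_term q z (S m)) <= alt_term q z 0 *
    (sum_f_R0 (fun m => prodR (phi_pow (9/10)) (S m)) 5
     + prodR (phi_pow (9/10)) 7 / (1 - 975/1000)).
Proof.
  intros Hq Hz.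
  assert (Ha0 : 0 <= alt_term q z 0) by (apply alt_term_nonneg; lra).
  assert (Hs : ex_series (fun m => alt_term q z (S m)))
    by (apply (ex_series_incr_1 (alt_term q z)), ex_series_alt_term; lra).
  rewrite (Series_incr_n _ 6) by (lia || exact Hs). simpl pred.
  rewrite Rmult_plus_distr_l, scal_sum.
  apply Rplus_le_compat.
  - apply sum_Rle. intros m Hm. rewrite Rmult_comm.
    eapply Rle_trans; [apply alt_term_le_prod_phi_pow; assumption|].
    apply Rmult_le_compat_l; [exact Ha0|apply prodR_phi_pow_le; [exact Hq|lia]].
  - set (B := alt_term q z 0 * prodR (phi_pow (9/10)) 7).
    assert (Hgeom : is_series (fun k => B * (975/1000) ^ k) (B / (1 - 975/1000))).
    { apply (is_series_scal_l B (fun k => (975/1000) ^ k)), is_series_geom.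
      rewrite Rabs_pos_eq; lra. }
    replace (alt_term q z 0 * (prodR (phi_pow (9/10)) 7 / (1 - 975/1000))) with (B / (1 - 975/1000))
      by (unfold B; field; lra).
    rewrite <- (is_series_unique _ _ Hgeom).
    apply Series_le; [|eexists; exact Hgeom].
    intros k. split; [apply alt_term_nonneg; lra|].
    replace (S (6 + k)) with (7 + k)%nat by lia.
    eapply Rle_trans; [apply alt_term_le_prod_phi_pow; assumption|].
    unfold B. rewrite Rmult_assoc.
    apply Rmult_le_compat_l; [exact Ha0|apply prodR_phi_pow_tail, Hq].
Qed.

Lemma alt_series_pos_of_q_ge q z : 9/10 <= q < 1 -> 0 <= z <= 5 -> 0 < alt_series q z.
Proof.
  intros Hq Hz.
  assert (HA := Series_alt_ge (alt_term q z) (fun m => alt_term_nonneg q ltac:(lra) z m ltac:(lra))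
                  (ex_series_alt_term q ltac:(lra) z ltac:(lra))).
  pose proof (Series_alt_term_succ_le q z Hq Hz). pose proof phi_pow_sum_lt_1.
  pose proof (alt_term_0_pos q ltac:(lra) z ltac:(lra)).
  unfold alt_series. nra.
Qed.

(** * The case q < 9/10 *)

(* The numerator of the lower bound on [1 - w alt_series q w] given by the first three terms. *)
Definition lower_num (q w : R) : R :=
  1 - w * (1 - q) + w * alt_ratio q w 0 * (1 - alt_ratio q w 1).

Lemma theta_opp_pos_of_lower_num q z : 0 < q < 1 -> 0 <= q * z <= 46/10 ->
  0 < lower_num q (q * z) -> 0 < theta q (- z).
Proof.
  intros Hq Hw HN. rewrite theta_opp_functional_eq, theta_opp_eq_alt_series by lra.
  set (w := q * z) in *.
  assert (Hd : 0 < 1 + w * q) by (apply one_add_mul_pos; lra).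
  assert (HwA : w * alt_series q w
                <= w * ((1 - alt_ratio q w 0 * (1 - alt_ratio q w 1)) / (1 + w * q)))
    by (apply Rmult_le_compat_l, alt_series_le_three_terms; lra).
  assert (HNd : 1 - w * ((1 - alt_ratio q w 0 * (1 - alt_ratio q w 1)) / (1 + w * q))
                = lower_num q w / (1 + w * q)) by (unfold lower_num; field; lra).
  pose proof (Rdiv_lt_0_compat _ _ HN Hd). lra.
Qed.

Lemma lower_num_pos_outer q z : 0 < q < 1 -> q < 27/100 \/ 73/100 < q ->
  0 <= z <= 5 -> q * z <= 46/10 -> 0 < lower_num q (q * z).
Proof.
  intros Hq Hout Hz Hw. unfold lower_num.
  pose proof (alt_ratio_lt_1 q (q * z) 1 Hq ltac:(nra)).
  pose proof (alt_ratio_nonneg q Hq (q * z) 0 ltac:(nra)).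
  assert (0 <= q * z * alt_ratio q (q * z) 0 * (1 - alt_ratio q (q * z) 1))
    by (apply Rmult_le_pos; [apply Rmult_le_pos|]; nra).
  assert (0 <= (5 - z) * (q * (1 - q))) by (apply Rmult_le_pos; nra).
  assert (0 < (q - 27/100) * (q - 73/100)) by (destruct Hout; nra).
  nra.
Qed.

Lemma lower_num_pos_cell q1 q2 q z : 0 < q1 <= q -> q <= q2 < 1 -> 46/10 <= z <= 5 ->
  let lo0 := (1 - q2 ^ 1) * q1 ^ 2 * (46/10 * q1) ^ 2
             / ((1 + 5 * q2 * q2 ^ 2) * (1 + 5 * q2 * q2 ^ 3)) in
  let hi1 := (1 - q1 ^ 3) * q2 ^ 4 * (5 * q2) ^ 2
             / ((1 + 46/10 * q1 * q1 ^ 4) * (1 + 46/10 * q1 * q1 ^ 5)) in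
  hi1 <= 1 -> 0 < 1 - 5 * q2 * (1 - q1) + 46/10 * q1 * lo0 * (1 - hi1) ->
  0 < lower_num q (q * z).
Proof.
  intros Hq1 Hq2 Hz lo0 hi1 Hhi1 Hcell.
  set (w := q * z).
  assert (Hw : 46/10 * q1 <= w <= 5 * q2) by (unfold w; nra).
  destruct (ratio_bounds q1 q2 (46/10 * q1) (5 * q2) q w 1 2 2 3 ltac:(lra) ltac:(lra)
              ltac:(lra) ltac:(lra)) as [Hlo0 [Hrho0 _]].
  destruct (ratio_bounds q1 q2 (46/10 * q1) (5 * q2) q w 3 4 4 5 ltac:(lra) ltac:(lra)
              ltac:(lra) ltac:(lra)) as [_ [_ Hrho1]].
  fold lo0 in Hlo0, Hrho0. fold hi1 in Hrho1.
  change (lo0 <= alt_ratio q w 0) in Hrho0. change (alt_ratio q w 1 <= hi1) in Hrho1.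
  unfold lower_num.
  assert (w * (1 - q) <= 5 * q2 * (1 - q1)) by nra.
  assert (46/10 * q1 * lo0 * (1 - hi1) <= w * alt_ratio q w 0 * (1 - alt_ratio q w 1))
    by (apply Rmult3_le_compat; lra).
  lra.
Qed.

(* Cell [k] is [[0.27 + k/100, 0.28 + k/100]]; there the hypotheses of [lower_num_pos_cell]
   are closed numerical inequalities. *)
Lemma lower_num_pos_mid q z : 27/100 <= q <= 73/100 -> 46/10 <= z <= 5 ->
  0 < lower_num q (q * z).
Proof.
  intros Hq Hz.
  apply (interval_cover (fun q => 0 < lower_num q (q * z)) (27/100) (1/100) 45);
    [|simpl INR; lra].
  clear q Hq. intros k Hk q Hq.
  do 46 (destruct k as [|k];
    [simpl INR in Hq;
     match type of Hq with ?q1 <= _ <= ?q2 => apply (lower_num_pos_cell q1 q2) end; lra|]).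
  lia.
Qed.

Theorem proposition1 :
  forall q : R, 0 < q < 1 ->
  forall x : R, -5 <= x -> theta q x <> 0.
Proof.
  intros q Hq x Hx. apply Rgt_not_eq.
  destruct (Rle_lt_dec 0 x) as [Hpos|Hneg]; [apply theta_pos; lra|].
  replace x with (- - x) by ring. set (z := - x).
  assert (Hz : 0 <= z <= 5) by (unfold z; lra).
  destruct (Rle_lt_dec (9/10) q) as [Hq9|Hq9].
  { rewrite theta_opp_eq_alt_series by lra. apply alt_series_pos_of_q_ge; lra. }
  destruct (Rle_lt_dec z (46/10)) as [Hz46|Hz46].
  { rewrite theta_opp_eq_alt_series by lra. apply alt_series_pos_of_z_le; lra. }
  apply theta_opp_pos_of_lower_num; [exact Hq|nra|].
  destruct (Rle_lt_dec (27/100) q); [destruct (Rle_lt_dec q (73/100))|].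
  - apply lower_num_pos_mid; lra.
  - apply lower_num_pos_outer; [lra|right; lra|lra|nra].
  - apply lower_num_pos_outer; [lra|left; lra|lra|nra].
Qed.
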